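(* Let $\mathbf{U}^{(j)}\in\mathbb{C}^{n_j\times n_j}$ be unitary for $j\in[d]$, let $\mathcal{S}\subset[n_1]\times\cdots\times[n_d]$ be a set of $r$ indices, and let $$\mathcal{L}_{\rm Tucker}:=\{\mathcal{C}\times_1\mathbf{U}^{(1)}\cdots\times_d\mathbf{U}^{(d)}:\mathcal{C}\in\mathbb{C}^{n_1\times\cdots\times n_d},\ \mathcal{C}_{\mathbf{i}}=0\text{ for all }\mathbf{i}\notin\mathcal{S}\}.$$ Every $\mathcal{Y}\in\mathcal{L}_{\rm Tucker}$ is written in standard form $\mathcal{Y}=\sum_{\mathbf{i}=(i_1,\dots,i_d)\in\mathcal{S}}\mathcal{C}_{\mathbf{i}}\bigcirc_{\ell=1}^d\mathbf{U}^{(\ell)}_{i_\ell}$ over the basis $\mathcal{B}=\{\bigcirc_{\ell=1}^d\mathbf{U}^{(\ell)}_{i_\ell}:\mathbf{i}\in\mathcal{S}\}$, where $\mathbf{U}^{(\ell)}_{i}$ is the $i$-th column of $\mathbf{U}^{(\ell)}$. Let $\epsilon\in(0,3/4]$ and for each $j\in[d]$ let $\mathbf{A}_j\in\mathbb{C}^{m_j\times n_j}$ be an $(\epsilon/4d)$-JL embedding into $\mathbb{C}^{m_j}$ of the set of $2r^2-r$ vectors $\bigcup_{k\ne h}\{\mathbf{y}^{(j)}_k\pm\mathbf{y}^{(j)}_h,\mathbf{y}^{(j)}_k\pm\mathrm{i}\,\mathbf{y}^{(j)}_h\}\cup\{\mathbf{y}^{(j)}_k\}_k$, where $\{\mathbf{y}^{(j)}_k\}_{k\in[r]}$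 are the mode-$j$ factor vectors $\mathbf{U}^{(j)}_{i_j}$ of the $r$ basis tensors. Then for every $\mathcal{Y}\in\mathcal{L}_{\rm Tucker}$, $$\big|\|\mathcal{Y}\|^2-\|\mathcal{Y}\times_1\mathbf{A}_1\cdots\times_d\mathbf{A}_d\|^2\big|\le\epsilon'\|\mathcal{Y}\|^2,$$ where $$\epsilon':=\begin{cases}\big(\epsilon+e\sqrt{r(r-1)}\,\epsilon^d\big)e&\text{if }\mu_{\mathcal{B}}=0,\\ \epsilon\big(e+e^2\sqrt{r(r-1)}\max(\epsilon^{d-1},\mu_{\mathcal{B}}^{d-1})\big)&\text{otherwise.}\end{cases}$$
   Context: Tensors carry the inner product $\langle\mathcal{X},\mathcal{Y}\rangle=\sum\mathcal{X}_{i_1\dots i_d}\overline{\mathcal{Y}_{i_1\dots i_d}}$ and norm $\|\cdot\|$; $\bigcirc$ is the outer product; $(\mathcal{Z}\times_j\mathbf{U})_{i_1,\dots,\ell,\dots,i_d}=\sum_{i_j}\mathcal{Z}_{i_1,\dots,i_j,\dots,i_d}\mathbf{U}_{\ell,i_j}$; $\mathrm{i}$ is the imaginary unit, $e$ Euler's number. A matrix is an $\epsilon$-JL embedding of $S$ if $\|\mathbf{A}x\|_2^2=(1+\epsilon_x)\|x\|_2^2$ with $\epsilon_x\in(-\epsilon,\epsilon)$ for all $x\in S$. For a basis $\{\bigcirc_\ell\mathbf{y}^{(\ell)}_k\}_{k\in[r]}$ of unit-vector rank-one tensors, $\mu_{\mathcal{B}}=\max_{\ell\in[d]}\max_{k\ne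 h}|\langle\mathbf{y}^{(\ell)}_k,\mathbf{y}^{(\ell)}_h\rangle|$. *)

From mathcomp Require Import all_boot all_order all_algebra.
From mathcomp Require Import all_reals all_analysis.
From mathcomp Require Export complex.
Set Implicit Arguments. Unset Strict Implicit. Unset Printing Implicit Defensive.
Import Order.TTheory GRing.Theory Num.Theory.
Local Open Scope ring_scope.

Definition cabs2 (R : realType) (x : R[i]) : R :=
  complex.Re x ^+ 2 + complex.Im x ^+ 2.

Definition idx (d : nat) (n : 'I_d -> nat) : finType :=
  {dffun forall l : 'I_d, 'I_(n l)}.

Definition tensor (R : realType) (d : nat) (n : 'I_d -> nat) := idx n -> R[i].

Definition tnorm2 (R : realType) d (n : 'I_d -> nat) (X : tensor R n) : R :=
  \sum_(i : idx n) cabs2 (X i).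

Definition vnorm2 (R : realType) k (x : 'cV[R[i]]_k) : R :=
  \sum_(i < k) cabs2 (x i 0).

Definition cinner (R : realType) k (x y : 'cV[R[i]]_k) : R[i] :=
  \sum_(i < k) x i 0 * conjc (y i 0).

Definition multi_mode_prod (R : realType) d (n m : 'I_d -> nat)
    (X : tensor R n) (A : forall l : 'I_d, 'M[R[i]]_(m l, n l)) : tensor R m :=
  fun k => \sum_(i : idx n) X i * \prod_(l < d) A l (k l) (i l).

Definition unitary (R : realType) k (U : 'M[R[i]]_k) : Prop :=
  U *m (map_mx conjc U)^T = 1%:M.

Definition JL_embedding (R : realType) m k (eps : R) (A : 'M[R[i]]_(m, k))
    (S : 'cV[R[i]]_k -> Prop) : Prop :=
  forall x, S x -> exists ex : R,
    - eps < ex < eps /\ vnorm2 (A *m x) = (1 + ex) * vnorm2 x.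

Definition factor_vec (R : realType) d (n : 'I_d -> nat)
    (U : forall l : 'I_d, 'M[R[i]]_(n l)) (l : 'I_d) (i : idx n) : 'cV[R[i]]_(n l) :=
  col (i l) (U l).

Definition JL_set (R : realType) d (n : 'I_d -> nat)
    (U : forall l : 'I_d, 'M[R[i]]_(n l)) (S : {set idx n}) (j : 'I_d)
    (x : 'cV[R[i]]_(n j)) : Prop :=
  (exists k h, [/\ k \in S, h \in S, k != h &
     [\/ x = factor_vec U j k + factor_vec U j h,
         x = factor_vec U j k - factor_vec U j h,
         x = factor_vec U j k + 'i%C *: factor_vec U j h |
         x = factor_vec U j k - 'i%C *: factor_vec U j h]])
  \/ (exists2 k, k \in S & x = factor_vec U j k).
Arguments JL_set {R d n} U S j x.

(* mu_B = max_l max_{k != h} |<y^(l)_k, y^(l)_h>| (0 if there is no pair) *)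
Definition muB (R : realType) d (n : 'I_d -> nat)
    (U : forall l : 'I_d, 'M[R[i]]_(n l)) (S : {set idx n}) : R :=
  \big[Num.max/0]_(l < d) \big[Num.max/0]_(k in S)
     \big[Num.max/0]_(h in S | h != k)
        Num.sqrt (cabs2 (cinner (factor_vec U l k) (factor_vec U l h))).

Definition eps_prime (R : realType) (d r : nat) (eps mu : R) : R :=
  let e := expR (1 : R) in
  let s := Num.sqrt ((r * (r - 1))%:R : R) in
  if mu == 0 then (eps + e * s * eps ^+ d) * e
  else eps * (e + e ^+ 2 * s * Num.max (eps ^+ d.-1) (mu ^+ d.-1)).

From mathcomp Require Import all_boot all_order all_algebra.
From mathcomp Require Import all_reals all_analysis.
From mathcomp Require Import boolp complex ring lra.
Import Order.TTheory GRing.Theory Num.Theory Normc.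
Set Implicit Arguments. Unset Strict Implicit. Unset Printing Implicit Defensive.
Local Open Scope ring_scope.
Local Open Scope complex_scope.

(* Both ||Y||^2 and ||Y x_1 A_1 ... x_d A_d||^2 are sesquilinear
   forms sum_(k,h) C_k conj(C_h) G_kh in the coefficients, with G_kh the product
   over the modes of the inner products of the (embedded) factor vectors; for Y
   itself G is the identity because the U^(l) are unitary.  By polarization, an
   (eps/4d)-JL embedding of the vectors y_k, y_k +- y_h, y_k +- i y_h moves each
   mode-wise inner product by at most eps/2d.  Hence a diagonal entry of G moves
   by at most eps/2, and an off-diagonal one by at most
   eps/2d (mu + eps/2d)^(d-1) <= eps max(eps, mu)^(d-1): in some mode k and h
   differ, where the unperturbed inner product vanishes.  With
   (sum_k |C_k|)^2 <= r sum_k |C_k|^2 the error is at most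
   (eps/2 + (r-1) eps max(eps, mu)^(d-1)) ||Y||^2 <= eps' ||Y||^2. *)

Lemma bigA_distr_dffun (K : comPzSemiRingType) (I : finType) (T_ : I -> finType)
    (F : forall i, T_ i -> K) :
  \prod_(i : I) \sum_(j : T_ i) F i j
  = \sum_(f : {dffun forall i, T_ i}) \prod_(i : I) F i (f i).
Proof.
under eq_bigr do rewrite (big_tag (fun i (j : T_ i) => F i j)).
rewrite bigA_distr_big_dep.
transitivity (\sum_(t : fprod T_) \prod_(i in I) [ffun j => F i j] (t i)).
  rewrite big_fprod; apply: eq_bigr => g _; apply: eq_bigr => i _.
  by rewrite /untag; case: eqP => // e; rewrite ffunE.
rewrite (reindex (@fprod_of_dffun I T_)); last exact/onW_bij/fprod_of_dffun_bij.
by apply: eq_bigr => f _; apply: eq_bigr => i _; rewrite fprodE ffunE.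
Qed.

Lemma dffun_neq (I : finType) (T_ : I -> finType) (f g : {dffun forall i, T_ i}) :
  f != g -> exists i, f i != g i.
Proof.
move=> fg; apply/existsP; apply: contraNT fg; rewrite negb_exists => /forallP fg.
by apply/eqP/ffunP => i; apply/eqP; rewrite -[_ == _]negbK fg.
Qed.

Section ComplexScalars.
Variable R : realType.
Implicit Types (z : R[i]) (a : R).

Lemma normc_ge0 z : 0 <= normc z.
Proof. by case: z => a b; exact: sqrtr_ge0. Qed.

Lemma normcR a : normc a%:C = `|a|.
Proof. by rewrite /= expr0n addr0 sqrtr_sqr. Qed.

Lemma normcRB a b : normc (a%:C - b%:C) = `|a - b|.
Proof. by rewrite -normcR; congr normc; apply/esym/rmorphB. Qed.

Lemma normc_conj z : normc z^* = normc z.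
Proof. by case: z => a b; rewrite /= sqrrN. Qed.

Lemma sqr_normc_cabs2 z : normc z ^+ 2 = cabs2 z.
Proof. by case: z => a b; rewrite sqr_sqrtr // addr_ge0 ?sqr_ge0. Qed.

Lemma cabs2E z : (cabs2 z)%:C = z * z^*.
Proof. by rewrite /cabs2 add_Re2_Im2 normCK. Qed.

Lemma normc_sum (I : Type) (r : seq I) (P : pred I) (F : I -> R[i]) :
  normc (\sum_(i <- r | P i) F i) <= \sum_(i <- r | P i) normc (F i).
Proof.
elim/big_rec2: _ => [|i a b _ le_ab]; first by rewrite normc0.
by apply: le_trans (le_normcD _ _) _; rewrite lerD2l.
Qed.

Lemma normc_prod (I : Type) (r : seq I) (P : pred I) (F : I -> R[i]) :
  normc (\prod_(i <- r | P i) F i) = \prod_(i <- r | P i) normc (F i).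
Proof. by elim/big_rec2: _ => [|i a b _ <-]; rewrite ?normc1 ?normcM. Qed.

Definition quarter_turns : seq R[i] := [:: 1; -1; 'i%C; - 'i%C].

Lemma quarter_turn_unit z : z \in quarter_turns -> z * z^* = 1.
Proof.
rewrite !inE => /or4P[] /eqP ->; apply/eqP; rewrite eq_complex /=;
  by apply/andP; split; apply/eqP; ring.
Qed.

Lemma normc_quarter_turn z : z \in quarter_turns -> normc z = 1.
Proof.
rewrite !inE => /or4P[] /eqP ->; rewrite ?normcN ?normc1 //=;
  by rewrite expr0n add0r expr1n sqrtr1.
Qed.

Lemma sum_quarter_turns : \sum_(z <- quarter_turns) z = 0.
Proof. by rewrite !big_cons big_nil; ring. Qed.

Lemma sum_sqr_quarter_turns : \sum_(z <- quarter_turns) z ^+ 2 = 0.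
Proof.
rewrite !big_cons big_nil; transitivity (2 * ('i%C ^+ 2 + 1) : R[i]); first ring.
by rewrite sqr_i addNr mulr0.
Qed.

End ComplexScalars.
Arguments quarter_turns {R}.

Section InnerProduct.
Variables (R : realType) (k : nat).
Implicit Types (x y z : 'cV[R[i]]_k) (c : R[i]).

Lemma cinnerDl x y z : cinner (x + y) z = cinner x z + cinner y z.
Proof. by rewrite /cinner -big_split; apply: eq_bigr => i _; rewrite !mxE mulrDl. Qed.

Lemma cinnerDr x y z : cinner z (x + y) = cinner z x + cinner z y.
Proof.
by rewrite /cinner -big_split; apply: eq_bigr => i _; rewrite !mxE rmorphD mulrDr.
Qed.

Lemma cinnerZl c x y : cinner (c *: x) y = c * cinner x y.
Proof.
by rewrite /cinner big_distrr; apply: eq_bigr => i _; rewrite !mxE /= mulrA.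
Qed.

Lemma cinnerZr c x y : cinner x (c *: y) = c^* * cinner x y.
Proof.
by rewrite /cinner big_distrr; apply: eq_bigr => i _; rewrite !mxE rmorphM mulrCA.
Qed.

Lemma vnorm2E x : (vnorm2 x)%:C = cinner x x.
Proof. by rewrite raddf_sum; apply: eq_bigr => i _; exact: cabs2E. Qed.

Lemma vnorm2_ge0 x : 0 <= vnorm2 x.
Proof. by apply: sumr_ge0 => i _; rewrite -sqr_normc_cabs2 sqr_ge0. Qed.

Lemma cinner_unit_shift c x y : c * c^* = 1 ->
  cinner (x + c *: y) (x + c *: y)
  = cinner x x + cinner y y + c^* * cinner x y + c * cinner y x.
Proof.
move=> cc; rewrite !(cinnerDl, cinnerDr, cinnerZl, cinnerZr).
transitivity (cinner x x + c * c^* * cinner y y + c^* * cinner x y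
              + c * cinner y x); first ring.
by rewrite cc mul1r.
Qed.

Lemma polarization x y :
  4 * cinner x y = \sum_(c <- quarter_turns) c * cinner (x + c *: y) (x + c *: y).
Proof.
rewrite big_seq (eq_bigr (fun c => c * (cinner x x + cinner y y) + cinner x y
                                   + c ^+ 2 * cinner y x)); last first.
  move=> c /quarter_turn_unit cc; rewrite cinner_unit_shift //.
  transitivity (c * (cinner x x + cinner y y) + c * c^* * cinner x y
                + c ^+ 2 * cinner y x); first ring.
  by rewrite cc mul1r.
rewrite -big_seq !big_split /= -!big_distrl /= sum_quarter_turns.
by rewrite sum_sqr_quarter_turns !big_cons big_nil; ring.
Qed.

Lemma parallelogram x y :
  \sum_(c <- quarter_turns) vnorm2 (x + c *: y) = 4 * (vnorm2 x + vnorm2 y).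
Proof.
have E : \sum_(c <- quarter_turns) cinner (x + c *: y) (x + c *: y)
         = 4 * (cinner x x + cinner y y).
  rewrite big_seq (eq_bigr (fun c => cinner x x + cinner y y + c^* * cinner x y
                                     + c * cinner y x)); last first.
    by move=> c /quarter_turn_unit; apply: cinner_unit_shift.
  rewrite -big_seq !big_split /= -!big_distrl /= -rmorph_sum sum_quarter_turns.
  by rewrite rmorph0 !big_cons !big_nil; ring.
apply: complexI; move: E; under eq_bigr do rewrite -vnorm2E.
by rewrite -!vnorm2E -rmorph_sum -rmorphD -(rmorph_nat (real_complex R)) -rmorphM.
Qed.

End InnerProduct.

Lemma cinner_distortion (R : realType) k m (A : 'M[R[i]]_(m, k)) (dl : R)
    (x y : 'cV[R[i]]_k) :
  (forall c, c \in quarter_turns -> exists e : R, `|e| <= dl /\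
     vnorm2 (A *m (x + c *: y)) = (1 + e) * vnorm2 (x + c *: y)) ->
  normc (cinner (A *m x) (A *m y) - cinner x y) <= dl * (vnorm2 x + vnorm2 y).
Proof.
move=> near_isometry.
have E : 4 * (cinner (A *m x) (A *m y) - cinner x y)
    = \sum_(c <- quarter_turns)
        c * ((vnorm2 (A *m (x + c *: y)))%:C - (vnorm2 (x + c *: y))%:C).
  rewrite mulrBr !polarization -sumrB; apply: eq_bigr => c _.
  by rewrite mulmxDr scalemxAr !vnorm2E mulrBr.
have normc4 (z : R[i]) : normc (4 * z) = 4 * normc z.
  by rewrite normcM normcMn normc1.
rewrite -(ler_pM2l (_ : 0 < 4)) // -normc4 E mulrCA -parallelogram mulr_sumr.
apply: le_trans (normc_sum _ _ _) _; rewrite !big_seq; apply: ler_sum => c cq.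
have [e [le_e ->]] := near_isometry c cq.
rewrite -rmorphB mulrDl mul1r addrAC subrr add0r normcM normc_quarter_turn //.
by rewrite mul1r normcR normrM (ger0_norm (vnorm2_ge0 _)) ler_wpM2r ?vnorm2_ge0.
Qed.

Section RealEstimates.
Variable R : realFieldType.
Implicit Types (t dl : R).

Lemma reverse_bernoulli_le t k :
  0 <= t -> 2 * k%:R * t <= 1 -> (1 + t) ^+ k <= 1 + 2 * k%:R * t.
Proof.
move=> t_ge0; elim: k => [|k IHk] le_kt1; first by rewrite expr0 mulr0n mulr0 mul0r addr0.
have le_kt : 2 * k%:R * t <= 1.
  by apply: le_trans le_kt1; rewrite ler_wpM2r // ler_wpM2l // ler_nat.
rewrite exprS -natr1; apply: le_trans (_ : (1 + t) * (1 + 2 * k%:R * t) <= _).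
  by rewrite ler_wpM2l ?IHk //; lra.
have := ler_wpM2r t_ge0 le_kt; rewrite -natr1 mul1r; nra.
Qed.

Lemma bernoulli_le t k : 0 <= t <= 1 -> 1 - k%:R * t <= (1 - t) ^+ k.
Proof.
move=> /andP[t_ge0 t_le1]; elim: k => [|k IHk]; first by rewrite expr0 mul0r subr0.
rewrite exprS -natr1; apply: le_trans (_ : (1 - t) * (1 - k%:R * t) <= _).
  have : 0 <= k%:R * t * t by rewrite !mulr_ge0.
  nra.
by rewrite ler_wpM2l // subr_ge0.
Qed.

Lemma norm_prod_sub1_le (I : finType) (f : I -> R) dl :
  0 <= dl <= 1 -> 2 * #|I|%:R * dl <= 1 -> (forall i, `|f i - 1| <= dl) ->
  `|\prod_i f i - 1| <= 2 * #|I|%:R * dl.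
Proof.
move=> /andP[dl_ge0 dl_le1] small near1.
have /andP[lo hi] : (1 - dl) ^+ #|I| <= \prod_i f i <= (1 + dl) ^+ #|I|.
  rewrite -!prodr_const; apply/andP; split; apply: ler_prod => i _;
  by have := near1 i; rewrite ler_norml => /andP[? ?]; apply/andP; split; lra.
have := reverse_bernoulli_le dl_ge0 small.
have := @bernoulli_le dl #|I|; rewrite dl_ge0 dl_le1 => /(_ isT).
have : 0 <= #|I|%:R * dl by rewrite mulr_ge0.
by rewrite ler_norml => *; apply/andP; split; lra.
Qed.

Lemma sqr_sum_le_card (I : finType) (S : {set I}) (c : I -> R) :
  (\sum_(i in S) c i) ^+ 2 <= #|S|%:R * \sum_(i in S) c i ^+ 2.
Proof.
rewrite expr2 big_distrl /=.
have -> : #|S|%:R * \sum_(i in S) c i ^+ 2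
    = \sum_(i in S) \sum_(j in S) (c i ^+ 2 + c j ^+ 2) / 2.
  under [RHS]eq_bigr do rewrite -big_distrl /= big_split /= sumr_const.
  by rewrite -big_distrl /= big_split /= sumr_const sumrMnl; field.
apply: ler_sum => i _; rewrite big_distrr /=; apply: ler_sum => j _.
have := sqr_ge0 (c i - c j); lra.
Qed.

End RealEstimates.

Lemma normc_sesquilinear_le (R : realType) (I : finType) (S : {set I})
    (C : I -> R[i]) (E : I -> I -> R[i]) (a b : R) :
  0 <= b ->
  (forall k, k \in S -> normc (E k k) <= a) ->
  (forall k h, k \in S -> h \in S -> k != h -> normc (E k h) <= b) ->
  normc (\sum_(k in S) \sum_(h in S) C k * (C h)^* * E k h)
    <= (a + #|S|.-1%:R * b) * \sum_(k in S) normc (C k) ^+ 2.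
Proof.
move=> b_ge0 diag offdiag.
pose c k := normc (C k); pose T := \sum_(k in S) c k ^+ 2.
pose sigma := \sum_(k in S) c k.
have c_ge0 k : 0 <= c k := normc_ge0 _.
have normc_term k h : normc (C k * (C h)^* * E k h) = c k * c h * normc (E k h).
  by rewrite !normcM normc_conj.
have others k : k \in S -> \sum_(h in S | h != k) c h = sigma - c k.
  by move=> kS; rewrite /sigma [in RHS](bigD1 k) //= addrAC subrr add0r.
apply: le_trans (_ : \sum_(k in S) (a * c k ^+ 2 + b * (c k * (sigma - c k))) <= _).
  apply: le_trans (normc_sum _ _ _) _; apply: ler_sum => k kS.
  apply: le_trans (normc_sum _ _ _) _.
  rewrite (bigD1 k) //= -others // normc_term; apply: lerD.
    by rewrite -expr2 mulrC ler_wpM2r ?exprn_ge0 ?diag.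
  rewrite mulr_sumr mulr_sumr; apply: ler_sum => h /andP[hS hk].
  by rewrite normc_term mulrC ler_wpM2r ?mulr_ge0 ?offdiag // eq_sym.
have -> : \sum_(k in S) (a * c k ^+ 2 + b * (c k * (sigma - c k)))
          = a * T + b * (sigma ^+ 2 - T).
  rewrite big_split /= -!mulr_sumr; congr (_ + b * _).
  under eq_bigr do rewrite mulrBr -expr2.
  by rewrite sumrB -mulr_suml expr2.
have T_ge0 : 0 <= T by apply: sumr_ge0 => k _; exact: exprn_ge0.
have : sigma ^+ 2 <= #|S|.-1.+1%:R * T.
  apply: le_trans (sqr_sum_le_card S c) _; rewrite ler_wpM2r // ler_nat.
  exact: leqSpred.
rewrite -natr1 -[\sum_(k in S) _]/T => /(ler_wpM2l b_ge0); lra.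
Qed.

Section SumOuter.
Variables (R : realType) (d : nat) (I : finType) (S : {set I}) (C : I -> R[i]).

Definition sum_outer (m : 'I_d -> nat) (v : forall l, I -> 'cV[R[i]]_(m l)) :
    tensor R m :=
  fun p => \sum_(k in S) C k * \prod_(l < d) v l k (p l) 0.

Lemma tnorm2_sum_outer (m : 'I_d -> nat) (v : forall l, I -> 'cV[R[i]]_(m l)) :
  (tnorm2 (sum_outer v))%:C
  = \sum_(k in S) \sum_(h in S) C k * (C h)^* * \prod_(l < d) cinner (v l k) (v l h).
Proof.
rewrite raddf_sum /=.
under eq_bigr do rewrite cabs2E rmorph_sum big_distrl /=.
under eq_bigr do under eq_bigr do rewrite big_distrr /=.
rewrite exchange_big /=; apply: eq_bigr => k _.
rewrite exchange_big /=; apply: eq_bigr => h _.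
rewrite /cinner bigA_distr_dffun big_distrr /=; apply: eq_bigr => p _.
rewrite rmorphM rmorph_prod /= -!mulrA; congr (_ * _).
by rewrite mulrCA -big_split.
Qed.

Lemma multi_mode_prod_sum_outer (m n : 'I_d -> nat)
    (v : forall l, I -> 'cV[R[i]]_(n l)) (A : forall l, 'M[R[i]]_(m l, n l)) :
  multi_mode_prod (sum_outer v) A = sum_outer (fun l k => A l *m v l k).
Proof.
apply: funext => p; rewrite /multi_mode_prod /sum_outer.
under eq_bigr do rewrite big_distrl /=.
rewrite exchange_big /=; apply: eq_bigr => k _.
under eq_bigr do rewrite -mulrA.
rewrite -big_distrr /=; congr (_ * _).
under [RHS]eq_bigr do rewrite mxE.
rewrite bigA_distr_dffun; apply: eq_bigr => i _.
by rewrite -big_split /=; apply: eq_bigr => l _; rewrite mulrC.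
Qed.

End SumOuter.

Lemma multi_mode_prod_supported (R : realType) d (n : 'I_d -> nat)
    (S : {set idx n}) (C : tensor R n) (U : forall l, 'M[R[i]]_(n l)) :
  (forall i, i \notin S -> C i = 0) ->
  multi_mode_prod C U = sum_outer S C (factor_vec U).
Proof.
move=> C_supp; apply: funext => p; rewrite /multi_mode_prod [RHS]big_mkcond /=.
apply: eq_bigr => i _; case: ifP => [_ | /negbT/C_supp ->]; last by rewrite mul0r.
by congr (_ * _); apply: eq_bigr => l _; rewrite mxE.
Qed.

Lemma unitary_cinner_col (R : realType) k (U : 'M[R[i]]_k) : unitary U ->
  forall a b, cinner (col a U) (col b U) = (a == b)%:R.
Proof.
move=> /mulmx1C UU a b; have := congr1 (fun M : 'M[R[i]]_k => M b a) UU.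
rewrite !mxE eq_sym => <-.
by apply: eq_bigr => j _; rewrite !mxE mulrC.
Qed.

Lemma muB_ge0 (R : realType) d (n : 'I_d -> nat) (U : forall l, 'M[R[i]]_(n l))
    (S : {set idx n}) : 0 <= muB U S.
Proof.
have max_ge0 (x y : R) : 0 <= x -> 0 <= y -> 0 <= Num.max x y by rewrite le_max => ->.
rewrite /muB; elim/big_ind: _ => // l _; elim/big_ind: _ => // k _.
by elim/big_ind: _ => // h _; exact: sqrtr_ge0.
Qed.

Lemma normc_cinner_le_muB (R : realType) d (n : 'I_d -> nat)
    (U : forall l, 'M[R[i]]_(n l)) (S : {set idx n}) l k h :
  k \in S -> h \in S -> h != k ->
  normc (cinner (factor_vec U l k) (factor_vec U l h)) <= muB U S.
Proof.
move=> kS hS hk; have -> : forall z : R[i], normc z = Num.sqrt (cabs2 z) by case.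
apply: le_trans (le_bigmax _ _ l); apply: le_trans (le_bigmax_cond _ _ kS).
apply: (le_bigmax_cond _ (fun h => Num.sqrt (cabs2 (cinner _ (factor_vec U l h))))).
by rewrite hS.
Qed.

Lemma offdiag_bound_le (R : realFieldType) (d : nat) (eps mu : R) :
  (0 < d)%N -> 0 < eps -> 0 <= mu ->
  2 * (eps / (4 * d%:R)) * (mu + 2 * (eps / (4 * d%:R))) ^+ d.-1
    <= eps * Num.max eps mu ^+ d.-1.
Proof.
move=> d_gt0 eps_gt0 mu_ge0; set dl := eps / _.
set M := Num.max eps mu; set t : R := (2 * d%:R)^-1.
have d_ge1 : 1 <= d%:R :> R by rewrite ler1n.
have t_ge0 : 0 <= t by rewrite invr_ge0 mulr_ge0 ?ler0n.
have dt : 2 * d%:R * t = 1 by rewrite mulfV // mulf_neq0 // pnatr_eq0 -lt0n.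
have dlE : 2 * dl = eps * t by rewrite /dl /t; field; rewrite pnatr_eq0 -lt0n.
have M_ge0 : 0 <= M by rewrite le_max ltW.
have le_mu2dl : mu + 2 * dl <= M * (1 + t).
  by rewrite dlE mulrDr mulr1 lerD ?ler_wpM2r // le_max lexx ?orbT.
have growth : (1 + t) ^+ d.-1 <= 2.
  have le_pred : 2 * d.-1%:R * t <= 1.
    by rewrite -[X in _ <= X]dt ler_wpM2r // ler_wpM2l // ler_nat leq_pred.
  by apply: le_trans (reverse_bernoulli_le t_ge0 le_pred) _; lra.
have : (mu + 2 * dl) ^+ d.-1 <= M ^+ d.-1 * 2.
  apply: le_trans (_ : (M * (1 + t)) ^+ d.-1 <= _).
    have dl2_ge0 : 0 <= 2 * dl by rewrite dlE mulr_ge0 // ltW.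
    by apply: lerXn2r; rewrite // nnegrE ?addr_ge0 // mulr_ge0 // addr_ge0.
  by rewrite exprMn ler_wpM2l ?exprn_ge0.
move=> /(ler_wpM2l (mulr_ge0 (ltW eps_gt0) t_ge0)); rewrite dlE.
have : 0 <= eps * M ^+ d.-1 by rewrite mulr_ge0 ?exprn_ge0 // ltW.
have : t <= d%:R * t by rewrite ler_peMl.
nra.
Qed.

Lemma eps_prime_ge (R : realType) (d r : nat) (eps mu : R) :
  (0 < d)%N -> 0 < eps -> 0 <= mu ->
  eps / 2 + r.-1%:R * (eps * Num.max eps mu ^+ d.-1) <= eps_prime d r eps mu.
Proof.
move=> d_gt0 eps_gt0 mu_ge0; rewrite /eps_prime /=.
set e := expR 1; set s := Num.sqrt _.
have e_ge1 : 1 <= e by rewrite -expR0 ler_expR ler01.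
have e_ge0 : 0 <= e := le_trans ler01 e_ge1.
have r_le_s : r.-1%:R <= s.
  rewrite -[r.-1%:R]ger0_norm ?ler0n // -sqrtr_sqr ler_wsqrtr // -natrX ler_nat.
  by rewrite subn1 -mulnn leq_mul2r leq_pred orbT.
have s_ge0 : 0 <= s by exact: sqrtr_ge0.
set P := Num.max eps mu ^+ d.-1.
have P_ge0 : 0 <= P by rewrite exprn_ge0 // le_max ltW.
have eP_ge0 : 0 <= eps * P by rewrite mulr_ge0 // ltW.
have rP_le : r.-1%:R * (eps * P) <= s * (eps * P) by rewrite ler_wpM2r.
have half_le : eps / 2 <= eps * e by rewrite -[eps / 2]mulr1; nra.
have ee_ge1 : 1 <= e ^+ 2 by rewrite expr_ge1.
case: eqP => [mu0 | _].
  have ePd : eps * P = eps ^+ d by rewrite /P mu0 max_l ?ltW // -exprS prednK.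
  rewrite ePd in rP_le eP_ge0.
  have : s * eps ^+ d <= e ^+ 2 * (s * eps ^+ d) by rewrite ler_peMl ?mulr_ge0.
  rewrite expr2; nra.
have PM : P <= Num.max (eps ^+ d.-1) (mu ^+ d.-1).
  by rewrite /P; case: (leP eps mu) => _; rewrite le_max lexx ?orbT.
set Mx := Num.max _ _.
have Mx_ge0 : 0 <= Mx by apply: le_trans PM.
have : s * (eps * P) <= s * (eps * Mx) by rewrite ler_wpM2l // ler_wpM2l // ltW.
have : s * (eps * Mx) <= e ^+ 2 * (s * (eps * Mx)) by rewrite ler_peMl ?mulr_ge0 // ltW.
rewrite expr2; nra.
Qed.

Section TuckerEmbedding.
Variables (R : realType) (d : nat) (n m : 'I_d -> nat)
  (U : forall l : 'I_d, 'M[R[i]]_(n l)) (S : {set idx n})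
  (A : forall l : 'I_d, 'M[R[i]]_(m l, n l)) (eps : R).
Hypotheses (d_gt0 : (0 < d)%N) (U_unitary : forall l, unitary (U l))
  (eps_range : 0 < eps <= 3 / 4)
  (A_JL : forall j : 'I_d, JL_embedding (eps / (4 * d%:R)) (A j) (JL_set U S j)).

Let dl := eps / (4 * d%:R).
Let y := factor_vec U.

Definition basis_distortion (k h : idx n) : R[i] :=
  \prod_(l < d) cinner (y l k) (y l h)
  - \prod_(l < d) cinner (A l *m y l k) (A l *m y l h).

Lemma cinner_factor_vec l k h : cinner (y l k) (y l h) = (k l == h l)%:R.
Proof. exact: unitary_cinner_col. Qed.

Lemma vnorm2_factor_vec l k : vnorm2 (y l k) = 1.
Proof. by apply: complexI; rewrite vnorm2E cinner_factor_vec eqxx. Qed.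

Lemma gram_factor_vec k h : \prod_(l < d) cinner (y l k) (y l h) = (k == h)%:R.
Proof.
have [<- | /dffun_neq[l0 kh]] := eqVneq k h.
  by rewrite big1 // => l _; rewrite cinner_factor_vec eqxx.
by rewrite (bigD1 l0) //= cinner_factor_vec (negbTE kh) mul0r.
Qed.

Lemma JL_near_isometry l x : JL_set U S l x ->
  exists e : R, `|e| <= dl /\ vnorm2 (A l *m x) = (1 + e) * vnorm2 x.
Proof.
move=> /(@A_JL l x)[e [/andP[lo hi] Ax]]; exists e; split => //.
by rewrite ltW // ltr_norml lo.
Qed.

Lemma dl_bounds : 0 <= dl <= 1 /\ 2 * d%:R * dl = eps / 2.
Proof.
have [eps_gt0 eps_le] := andP eps_range.
have d_ge1 : 1 <= d%:R :> R by rewrite ler1n.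
have d4_gt0 : 0 < 4 * d%:R :> R by rewrite mulr_gt0 // ltr0n.
split; last by rewrite /dl; field; rewrite pnatr_eq0 -lt0n.
rewrite /dl divr_ge0 ?(ltW eps_gt0) ?(ltW d4_gt0) //= ler_pdivrMr // mul1r; lra.
Qed.

Lemma diag_distortion_le k : k \in S -> normc (basis_distortion k k) <= eps / 2.
Proof.
move=> kS; have [/andP[dl_ge0 dl_le1] dl_d] := dl_bounds.
have -> : basis_distortion k k = (1 - \prod_(l < d) vnorm2 (A l *m y l k))%:C.
  rewrite /basis_distortion gram_factor_vec eqxx rmorphB rmorph_prod /= rmorph1.
  by congr (_ - _); apply: eq_bigr => l _; rewrite vnorm2E.
rewrite normcR distrC -dl_d -[d in 2 * d%:R]card_ord; apply: norm_prod_sub1_le.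
- by rewrite dl_ge0.
- by rewrite card_ord dl_d; case/andP: eps_range => *; lra.
move=> l.
have [e [le_e ->]] := @JL_near_isometry l (y l k) (or_intror (ex_intro2 _ _ k kS erefl)).
by rewrite vnorm2_factor_vec mulr1 addrAC subrr add0r.
Qed.

Lemma mode_distortion_le l k h : k \in S -> h \in S -> k != h ->
  normc (cinner (A l *m y l k) (A l *m y l h) - cinner (y l k) (y l h)) <= 2 * dl.
Proof.
move=> kS hS kh.
apply: le_trans (_ : _ <= dl * (vnorm2 (y l k) + vnorm2 (y l h))) _; last first.
  by rewrite !vnorm2_factor_vec; lra.
apply: cinner_distortion => c; rewrite !inE => /or4P[] /eqP ->;
  apply: JL_near_isometry; left; exists k, h; split => //.
- by apply: Or41; rewrite scale1r.
- by apply: Or42; rewrite scaleN1r.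
- exact: Or43.
- by apply: Or44; rewrite scaleNr.
Qed.

Lemma offdiag_distortion_le k h : k \in S -> h \in S -> k != h ->
  normc (basis_distortion k h) <= 2 * dl * (muB U S + 2 * dl) ^+ d.-1.
Proof.
move=> kS hS kh.
rewrite /basis_distortion gram_factor_vec (negbTE kh) sub0r normcN normc_prod.
have [l0 kh0] := dffun_neq kh.
have -> : (muB U S + 2 * dl) ^+ d.-1 = \prod_(l < d | l != l0) (muB U S + 2 * dl).
  by rewrite prodr_const cardC1 card_ord.
rewrite (bigD1 l0) //=; apply: ler_pM.
- exact: normc_ge0.
- by apply: prodr_ge0 => l _; exact: normc_ge0.
- by have := mode_distortion_le l0 kS hS kh; rewrite cinner_factor_vec (negbTE kh0) subr0.
apply: ler_prod => l _; rewrite normc_ge0 /=.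
rewrite -[cinner (A l *m _) _](subrK (cinner (y l k) (y l h))) addrC.
apply: le_trans (le_normcD _ _) _; apply: lerD; last exact: mode_distortion_le.
by apply: normc_cinner_le_muB; rewrite // eq_sym.
Qed.

Lemma sum_outer_distortion (C : idx n -> R[i]) :
  `|tnorm2 (sum_outer S C y) - tnorm2 (multi_mode_prod (sum_outer S C y) A)|
    <= eps_prime d #|S| eps (muB U S) * tnorm2 (sum_outer S C y).
Proof.
have [eps_gt0 _] := andP eps_range; have [/andP[dl_ge0 _] _] := dl_bounds.
have normY : tnorm2 (sum_outer S C y) = \sum_(k in S) normc (C k) ^+ 2.
  apply: complexI; rewrite tnorm2_sum_outer.
  rewrite raddf_sum; apply: eq_bigr => k kS.
  rewrite (bigD1 k) //= gram_factor_vec eqxx mulr1 big1 ?addr0.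
    by rewrite sqr_normc_cabs2; apply/esym/cabs2E.
  by move=> h /andP[_ hk]; rewrite gram_factor_vec eq_sym (negbTE hk) mulr0.
have diffE : (tnorm2 (sum_outer S C y))%:C
             - (tnorm2 (sum_outer S C (fun l k => A l *m y l k)))%:C
    = \sum_(k in S) \sum_(h in S) C k * (C h)^* * basis_distortion k h.
  rewrite !tnorm2_sum_outer -sumrB; apply: eq_bigr => k _.
  by rewrite -sumrB; apply: eq_bigr => h _; rewrite mulrBr.
have dl2_ge0 : 0 <= 2 * dl by rewrite mulr_ge0.
have B_ge0 : 0 <= 2 * dl * (muB U S + 2 * dl) ^+ d.-1.
  by rewrite mulr_ge0 // exprn_ge0 // addr_ge0 // muB_ge0.
rewrite multi_mode_prod_sum_outer -normcRB diffE normY.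
apply: le_trans (normc_sesquilinear_le _ B_ge0 diag_distortion_le
                   offdiag_distortion_le) _.
apply: ler_wpM2r; first by apply: sumr_ge0 => k _; exact: sqr_ge0.
apply: le_trans (eps_prime_ge _ d_gt0 eps_gt0 (muB_ge0 U S)).
by rewrite lerD2l ler_wpM2l ?ler0n // offdiag_bound_le // muB_ge0.
Qed.

End TuckerEmbedding.

Unset Implicit Arguments.

Theorem corollary3 (R : realType) (d : nat) (n m : 'I_d -> nat)
    (U : forall l : 'I_d, 'M[R[i]]_(n l)) (S : {set idx n})
    (A : forall l : 'I_d, 'M[R[i]]_(m l, n l)) (eps : R) :
  (0 < d)%N ->
  (forall l, unitary (U l)) ->
  0 < eps <= 3 / 4 ->
  (forall j : 'I_d, JL_embedding (eps / (4 * d%:R)) (A j) (JL_set U S j)) ->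
  forall Y : tensor R n,
    (exists C : tensor R n,
        (forall i, i \notin S -> C i = 0) /\ Y = multi_mode_prod C U) ->
    `| tnorm2 Y - tnorm2 (multi_mode_prod Y A) |
      <= eps_prime d #|S| eps (muB U S) * tnorm2 Y.
Proof.
move=> d_gt0 U_unitary eps_range A_JL Y [C [C_supp ->]].
rewrite (multi_mode_prod_supported U C_supp).
exact: sum_outer_distortion.
Qed.
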